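(* Let $\mathcal I$ be an ideal on $\mathbb N$ with the Baire property, and let $\sum_n x_n$ be a series in a Banach space $X$. Then $\sum_n x_n$ is unconditionally convergent if and only if the set $$B(\mathcal I,(x_n)):=\left\{t \in \{-1,1\}^{\mathbb N} \colon \sum_n t(n)x_n \text{ is } \mathcal I\text{-convergent}\right\}$$ is nonmeager in $\{-1,1\}^{\mathbb N}$ (with the product topology).
   Context: $\mathbb N=\{1,2,\dots\}$. An ideal on $\mathbb N$ is a family $\mathcal I\subset\mathcal P(\mathbb N)$ closed under finite unions and subsets, with $\mathbb N\notin\mathcal I$ and containing all finite subsets of $\mathbb N$. Identifying subsets of $\mathbb N$ with their characteristic functions, $\mathcal I$ is regarded as a subset of the Cantor space $\{0,1\}^{\mathbb N}$ (product topology), and ''$\mathcal I$ has the Baire property'' refers to this subset. A sequence $(y_n)$ in a normed space is $\mathcal I$-convergent to $y$ if $\{n:\|y_n-y\|>\varepsilon\}\in\mathcal I$ for every $\varepsilon>0$; a series is $\mathcal I$-convergent if its sequence of partial sums is $\mathcal I$-convergent to some element. A series $\sum_n x_n$ is unconditionally convergent if $\sum_n x_{p(n)}$ converges for every permutation $p$ of $\mathbb N$. Banach spaces are over $\mathbb R$. *)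

From HB Require Import structures.
From mathcomp Require Import all_boot all_order all_algebra.
From mathcomp Require Import all_classical all_reals all_analysis.
Set Implicit Arguments. Unset Strict Implicit. Unset Printing Implicit Defensive.
Import Order.TTheory GRing.Theory Num.Theory.
Import numFieldNormedType.Exports.
Local Open Scope classical_set_scope.
Local Open Scope ring_scope.

(* Conventions: the paper's index set N = {1,2,...} is represented by nat
   through the bijection m |-> m-1 (nat index n stands for the paper's n+1).
   A subset A of nat is identified with its characteristic function
   (fun n => `[< A n >]) : cantor_space = nat -> bool with the product topology. *)

Definition is_ideal (I : set (set nat)) : Prop :=
  [/\ (forall A B, I A -> I B -> I (A `|` B)),
      (forall A B, B `<=` A -> I A -> I B),
      ~ I [set: nat] &
      (forall A, finite_set A -> I A)].

Definition nowhere_dense {T : topologicalType} (A : set T) : Prop :=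
  (closure A)^° = set0.

Definition meager {T : topologicalType} (A : set T) : Prop :=
  exists F : nat -> set T,
    (forall n, nowhere_dense (F n)) /\ A `<=` \bigcup_n F n.

Definition has_Baire_property {T : topologicalType} (A : set T) : Prop :=
  exists U M : set T, [/\ open U, meager M & A = (U `\` M) `|` (M `\` U)].

Definition ideal_as_cantor_set (I : set (set nat)) : set cantor_space :=
  [set f : cantor_space | I [set n | f n]].

Definition I_convergent {R : realType} {V : normedModType R}
    (I : set (set nat)) (y : nat -> V) (l : V) : Prop :=
  forall e : R, 0 < e -> I [set n | e < `|y n - l|].

(* Partial sums s_1, s_2, ... of the series (paper indexing), i.e. the
   nat-indexed sequence n |-> x_0 + ... + x_n. *)
Definition partial_sums {R : realType} {V : normedModType R} (x : nat -> V)
  : nat -> V := fun n => series x n.+1.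

Definition I_convergent_series {R : realType} {V : normedModType R}
    (I : set (set nat)) (x : nat -> V) : Prop :=
  exists l : V, I_convergent I (partial_sums x) l.

Definition unconditionally_convergent {R : realType} {V : normedModType R}
    (x : nat -> V) : Prop :=
  forall p : nat -> nat, bijective p -> cvgn (series (fun n => x (p n))).

(* {-1,1}^N is encoded as cantor_space: true |-> 1, false |-> -1
   (a homeomorphism {0,1}^N ~ {-1,1}^N). *)
Definition sgn_of {R : realType} (b : bool) : R := if b then 1 else -1.

Definition B_set {R : realType} {V : normedModType R}
    (I : set (set nat)) (x : nat -> V) : set cantor_space :=
  [set t : cantor_space | I_convergent_series I (fun n => sgn_of (R:=R) (t n) *: x n)].

From HB Require Import structures.
From mathcomp Require Import all_boot all_order all_algebra.
From mathcomp Require Import all_classical all_reals all_analysis.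
From mathcomp Require Import lra.
Set Implicit Arguments. Unset Strict Implicit. Unset Printing Implicit Defensive.
Import Order.TTheory GRing.Theory Num.Theory.
Import numFieldNormedType.Exports.
Local Open Scope classical_set_scope.
Local Open Scope ring_scope.

(* Unconditional convergence is equivalent to the subseries Cauchy condition,
   under which every signed series sum_n t(n) x_n converges, so B(I,(x_n)) is
   the whole Cantor space, which is not meager.

   Conversely, let the subseries Cauchy condition fail with constant eps.  An
   ideal with the Baire property is meager: otherwise it is comeager in some
   cylinder [f|n], which is preserved by flipping every coordinate from n on,
   so I contains a set A and its flip, whose union with {0, ..., n-1} is N.
   By Talagrand's characterisation of meager ideals there are intervals
   [a_k, a_(k+1)) such that every member of I misses a point of almost every
   interval.  Hence for t in B(I,(x_n)) the partial sums come back within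
   eps/2 of some fixed partial sum in every late interval.  But inside any
   cylinder the signs can be chosen so that the partial sums eventually stay
   eps/2 away from any given point, so the sets of such t are nowhere dense
   and B(I,(x_n)) is meager. *)

Lemma ltn_incr_self (f : nat -> nat) :
  (forall k, (f k < f k.+1)%N) -> forall k, (k <= f k)%N.
Proof. by move=> f_incr; elim=> // k IH; exact: leq_ltn_trans IH (f_incr k). Qed.

Lemma leq_incr (f : nat -> nat) :
  (forall k, (f k < f k.+1)%N) -> {homo f : k l / (k <= l)%N}.
Proof. by move=> f_incr; apply: (homo_leq leqnn leq_trans) => k; exact: ltnW. Qed.

Section IntervalPartition.
Variable a : nat -> nat.
Hypotheses (a0 : a 0 = 0%N) (a_incr : forall k, (a k < a k.+1)%N).

Lemma block_ex i : exists k, (i < a k.+1)%N.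
Proof. by exists i; exact: ltn_incr_self. Qed.

Definition block i := ex_minn (block_ex i).

Lemma blockP i : (a (block i) <= i < a (block i).+1)%N.
Proof.
rewrite /block; case: ex_minnP => k ik kmin; rewrite ik andbT.
case: k ik kmin => [|k] ik kmin; first by rewrite a0.
by rewrite leqNgt; apply/negP => /kmin; rewrite ltnn.
Qed.

Lemma blockE i k : (a k <= i < a k.+1)%N -> block i = k.
Proof.
have le_block k1 k2 : (a k1 <= i < a k1.+1)%N -> (a k2 <= i < a k2.+1)%N ->
    (k1 <= k2)%N.
  move=> /andP[k1i _] /andP[_ ik2]; rewrite leqNgt; apply/negP.
  by move=> /(leq_incr a_incr)/leq_trans/(_ k1i); rewrite leqNgt ik2.
move=> ik; apply/eqP.
by rewrite eqn_leq (le_block _ _ (blockP i) ik) (le_block _ _ ik (blockP i)).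
Qed.

Variable L : nat -> seq nat.
Hypothesis L_perm : forall k, perm_eq (L k) (index_iota (a k) (a k.+1)).

Definition block_perm i := nth 0%N (L (block i)) (i - a (block i)).

Let size_L k : size (L k) = (a k.+1 - a k)%N.
Proof. by rewrite (perm_size (L_perm k)) size_iota. Qed.

Let mem_L k j : (j \in L k) = (a k <= j < a k.+1)%N.
Proof. by rewrite (perm_mem (L_perm k)) mem_index_iota. Qed.

Lemma block_permE k i :
  (i < a k.+1 - a k)%N -> block_perm (a k + i) = nth 0%N (L k) i.
Proof.
move=> ik; have block_ki : block (a k + i) = k.
  by apply: blockE => //; rewrite leq_addr -ltn_subRL.
by rewrite /block_perm block_ki addKn.
Qed.

Lemma block_perm_bij : bijective block_perm.
Proof.
have uniq_L k : uniq (L k) by rewrite (perm_uniq (L_perm k)) iota_uniq.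
pose q j := (a (block j) + index j (L (block j)))%N.
exists q => [i|j].
- have /andP[ai ia] := blockP i.
  have ik : (i - a (block i) < size (L (block i)))%N by rewrite size_L ltn_sub2r.
  have block_p : block (block_perm i) = block i.
    by apply: blockE => //; rewrite -mem_L mem_nth.
  by rewrite /q block_p /block_perm index_uniq // subnKC.
- have /andP[aj ja] := blockP j.
  have jk : (index j (L (block j)) < a (block j).+1 - a (block j))%N.
    by rewrite -size_L index_mem mem_L aj ja.
  by rewrite /q block_permE // nth_index // mem_L aj ja.
Qed.

End IntervalPartition.

Definition cylinder (f : cantor_space) (n : nat) : set cantor_space :=
  [set g | forall i, (i < n)%N -> g i = f i].

Lemma cylinder_trans f g n : cylinder f n g -> cylinder g n `<=` cylinder f n.
Proof. by move=> fg h gh i ilt; rewrite gh // fg. Qed.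

Lemma cylinder_le f m n : (m <= n)%N -> cylinder f n `<=` cylinder f m.
Proof. by move=> mn g fg i im; apply: fg; exact: leq_trans im mn. Qed.

Lemma cylinder_nbhs f n : nbhs f (cylinder f n).
Proof.
elim: n => [|n IH].
  by apply: filterS filterT => g _ i.
have -> : cylinder f n.+1 = cylinder f n `&` (proj n @^-1` [set f n]).
  rewrite eqEsubset; split=> g.
    by move=> fg; split; [exact: cylinder_le fg | exact: fg].
  by move=> [fg gn] i; rewrite ltnS leq_eqVlt => /orP[/eqP->|/fg].
apply: filterI => //; apply: (@proj_continuous nat (fun _ => bool) n f).
exact/principal_filterP.
Qed.

Lemma nbhs_cylinder f (U : set cantor_space) :
  nbhs f U -> exists n, cylinder f n `<=` U.
Proof.
move=> fU; apply: contrapT => /forallNP noU.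
have /all_sig[g /all_and2[fg gU]] n : {g | cylinder f n g /\ ~ U g}.
  by apply: cid; have /nonsubset[g] := noU n; exists g.
have g_f : g @ \oo --> f.
  apply/cvg_sup => i V [W] [[Z] _ <-] ZfN ZV.
  apply: (filterS ZV); exists i.+1 => // j /= ij.
  by rewrite /= (fg j).
by have [N _ /(_ N (leqnn N))] := g_f _ fU; exact: gU.
Qed.

Definition cyl_nowhere_dense (F : set cantor_space) : Prop :=
  forall f n, exists g m,
    [/\ (n <= m)%N, cylinder f n g & cylinder g m `<=` ~` F].

Lemma cyl_nowhere_denseP F : cyl_nowhere_dense F <-> nowhere_dense F.
Proof.
split=> [Fcnd|Fnd f n].
  rewrite /nowhere_dense -subset0 => f /nbhs_cylinder[n fnF].
  have [g [m [_ fg gF]]] := Fcnd f n.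
  have [h [Fh gh]] := fnF g fg _ (cylinder_nbhs g m).
  exact: gF gh Fh.
have [g fg gF] : exists2 g, cylinder f n g & ~ closure F g.
  apply: contrapT => /forall2NP fF; suff : (closure F)° f by rewrite Fnd.
  by apply: filterS (cylinder_nbhs f n) => g fg; have [|/contrapT] := fF g.
move: gF => /existsNP[B /not_implyP[gB /set0P/negP/negPn/eqP FB]].
have [m gB'] := nbhs_cylinder gB.
exists g, (maxn m n); split=> [|//|h /(cylinder_le (leq_maxl _ _))/gB' Bh Fh].
  exact: leq_maxr.
by have : (F `&` B) h by []; rewrite FB.
Qed.

Lemma cyl_nowhere_denseU F G :
  cyl_nowhere_dense F -> cyl_nowhere_dense G -> cyl_nowhere_dense (F `|` G).
Proof.
move=> Fcnd Gcnd f n.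
have [g [m [nm fg gF]]] := Fcnd f n.
have [h [p [mp gh hG]]] := Gcnd g m.
exists h, p; split; first exact: leq_trans nm mp.
  by apply: (cylinder_trans fg); exact: (cylinder_le nm gh).
move=> u hu [Fu|Gu]; last exact: hG hu Gu.
by apply: gF Fu; apply: (cylinder_trans gh); exact: (cylinder_le mp hu).
Qed.

Lemma nested_cylinders (g : nat -> cantor_space) (m : nat -> nat) :
  (forall k, (m k < m k.+1)%N) -> (forall k, cylinder (g k) (m k) (g k.+1)) ->
  exists t, forall k, cylinder (g k) (m k) t.
Proof.
move=> m_incr gS.
have g_nest k l : (k <= l)%N -> cylinder (g k) (m k) (g l).
  move=> /subnKC <-; elim: (l - k)%N => [|d IH]; first by rewrite addn0.
  rewrite addnS; apply: (cylinder_trans IH).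
  exact: (cylinder_le (leq_incr m_incr (leq_addr d k)) (gS _)).
exists (fun i => g i.+1 i) => k i ik /=.
have [ki|ik'] := leqP k i.+1; first exact: g_nest.
apply/esym/(g_nest _ _ (ltnW ik')).
exact: ltn_incr_self.
Qed.

Lemma cyl_nowhere_dense_avoid (G : nat -> set cantor_space) :
  (forall j, cyl_nowhere_dense (G j)) ->
  forall f n, exists2 t, cylinder f n t & forall j, ~ G j t.
Proof.
move=> Gcnd f n.
have step j (p : cantor_space * nat) : {q : cantor_space * nat |
    [/\ (p.2 < q.2)%N, cylinder p.1 p.2 q.1 & cylinder q.1 q.2 `<=` ~` G j]}.
  apply: cid; have [g [m [nm pg gG]]] := Gcnd j p.1 p.2.+1.
  by exists (g, m); split=> //; exact: cylinder_le pg.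
pose s := fix s k := if k is k'.+1 then sval (step k' (s k')) else (f, n).
have /all_and3[s_incr s_nest s_avoid] k := svalP (step k (s k)).
have [t st] :=
  @nested_cylinders (fun k => (s k).1) (fun k => (s k).2) s_incr s_nest.
by exists t => [|j]; [exact: st 0%N | exact: s_avoid (st j.+1)].
Qed.

Lemma meager_cylinder_avoid (A : set cantor_space) :
  meager A -> forall f n, exists2 t, cylinder f n t & ~ A t.
Proof.
move=> [F [Fnd AF]] f n.
have Fcnd j : cyl_nowhere_dense (F j) by apply/cyl_nowhere_denseP.
have [t ft tF] := cyl_nowhere_dense_avoid Fcnd f n.
by exists t => // /AF[j _]; exact: tF.
Qed.

Definition flip_from (n : nat) (t : cantor_space) : cantor_space :=
  fun i => if (i < n)%N then t i else ~~ t i.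

Lemma cylinder_flip_from n f g k :
  cylinder (flip_from n f) k g -> cylinder f k (flip_from n g).
Proof.
by move=> fg i /fg; rewrite /flip_from; case: ifP => _ ->; rewrite ?negbK.
Qed.

Lemma cyl_nowhere_dense_flip_from n F :
  cyl_nowhere_dense F -> cyl_nowhere_dense (flip_from n @^-1` F).
Proof.
move=> Fcnd f k; have [g [m [km fg gF]]] := Fcnd (flip_from n f) k.
exists (flip_from n g), m; split=> // [|u /cylinder_flip_from/gF//].
exact: cylinder_flip_from.
Qed.

Lemma ideal_Baire_meager (I : set (set nat)) : is_ideal I ->
  has_Baire_property (ideal_as_cantor_set I) -> meager (ideal_as_cantor_set I).
Proof.
move=> [IU Isub IT Ifin] [U [M [oU [F [Fnd MF]] IE]]].
have [[f0 Uf0]|U0] := pselect (U !=set0); last first.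
  exists F; split=> // t; rewrite IE => -[[Ut _]|[/MF//]].
  by case: U0; exists t.
have [n f0U] : exists n, cylinder f0 n `<=` U.
  by apply: nbhs_cylinder; move: oU; rewrite openE; exact.
have Fcnd j : cyl_nowhere_dense (F j `|` flip_from n @^-1` F j).
  have Fj : cyl_nowhere_dense (F j) by exact/cyl_nowhere_denseP.
  by apply: cyl_nowhere_denseU => //; exact: cyl_nowhere_dense_flip_from.
have [A f0A AF] := cyl_nowhere_dense_avoid Fcnd f0 n.
have I_U B : cylinder f0 n B -> (forall j, ~ F j B) -> I [set i | B i].
  move=> f0B FB; suff : ideal_as_cantor_set I B by [].
  by rewrite IE; left; split=> [|/MF[j _ /FB]//]; exact: f0U.
have f0A' : cylinder f0 n (flip_from n A).
  by move=> i ilt; rewrite /flip_from ilt f0A.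
have IA : I [set i | A i] by apply: I_U => // j Fj; apply: (AF j); left.
have IA' : I [set i | flip_from n A i].
  by apply: I_U => // j Fj; apply: (AF j); right.
have In : I [set i | (i < n)%N].
  by apply: Ifin; apply: sub_finite_set (finite_II n) => i.
(* [A] and its flip lie in [U `\` M], and together they cover [[n, oo)]. *)
exfalso; apply: IT.
suff <- : [set i | A i] `|` [set i | flip_from n A i] `|` [set i | (i < n)%N]
    = setT.
  exact: IU (IU _ _ IA IA') In.
apply/seteqP; split=> // i _; rewrite /flip_from /=.
by case: ltnP => _; [right | left; case: (A i); [left | right]].
Qed.

Definition splice (rho pi : cantor_space) (a : nat) : cantor_space :=
  fun i => if (i < a)%N then rho i else pi i.

Lemma cyl_nowhere_dense_splice_seq H a (rhos : seq cantor_space) :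
  cyl_nowhere_dense H -> exists b pi, (a < b)%N /\
    {in rhos, forall rho, cylinder (splice rho pi a) b `<=` ~` H}.
Proof.
move=> Hcnd; elim: rhos => [|rho rhos [b [pi [ab piH]]]].
  by exists a.+1, (fun _ => false); split.
have [g [m [bm g_pi gH]]] := Hcnd (splice rho pi a) b.
exists m, g; split=> [|r]; first exact: leq_trans ab bm.
rewrite in_cons => /predU1P[->|/piH rH] t.
  suff -> : splice rho g a = g by exact: gH.
  apply/funext => i; rewrite /splice; case: ifP => // ia.
  by rewrite g_pi ?(ltn_trans ia ab) // /splice ia.
move=> rt; apply: rH => i ib; rewrite rt ?(leq_trans ib bm) // /splice.
by case: ifP => // ia; rewrite g_pi // /splice ia.
Qed.

Lemma cyl_nowhere_dense_splice H a : cyl_nowhere_dense H ->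
  exists b pi, (a < b)%N /\ forall rho, cylinder (splice rho pi a) b `<=` ~` H.
Proof.
move=> Hcnd.
pose prefixes : seq cantor_space :=
  [seq (fun i => nth false s i) | s : a.-tuple bool].
have [b [pi [ab piH]]] := cyl_nowhere_dense_splice_seq a prefixes Hcnd.
exists b, pi; split=> // rho; pose s := [tuple rho i | i < a].
suff -> : splice rho pi a = splice (fun i => nth false s i) pi a.
  by apply: piH; apply: map_f; rewrite mem_enum.
apply/funext => i; rewrite /splice; case: ltnP => // ia.
by rewrite -[i]/(nat_of_ord (Ordinal ia)) nth_mktuple.
Qed.

Lemma cyl_nowhere_dense_bigcup (G : nat -> set cantor_space) n :
  (forall j, cyl_nowhere_dense (G j)) -> cyl_nowhere_dense (\bigcup_(j < n) G j).
Proof.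
move=> Gcnd; rewrite bigcup_mkord; elim: n => [|n IH].
  by rewrite big_ord0 => f k; exists f, k; split=> // t _ [].
by rewrite big_ord_recr; exact: cyl_nowhere_denseU.
Qed.

Lemma meager_ideal_blocks (I : set (set nat)) :
  (forall A B, B `<=` A -> I A -> I B) -> meager (ideal_as_cantor_set I) ->
  exists2 a : nat -> nat, forall k, (a k < a k.+1)%N &
    forall A, I A -> exists K, forall k, (K <= k)%N ->
      exists2 i, (a k <= i < a k.+1)%N & ~ A i.
Proof.
move=> Isub [G [Gnd IG]].
have Gcnd j : cyl_nowhere_dense (G j) by exact/cyl_nowhere_denseP.
pose H k := \bigcup_(j < k.+1) G j.
have step k n : {bp : nat * cantor_space | (n < bp.1)%N /\
    forall rho, cylinder (splice rho bp.2 n) bp.1 `<=` ~` H k}.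
  apply: cid; have [b [pi]] := cyl_nowhere_dense_splice n
    (cyl_nowhere_dense_bigcup k.+1 Gcnd).
  by exists (b, pi).
pose a := fix a k := if k is k'.+1 then (sval (step k' (a k'))).1 else 0%N.
pose pi k := (sval (step k (a k))).2.
have /all_and2[a_incr a_pi] k := svalP (step k (a k)).
exists a => // A IA; apply: contrapT => /forallNP noK.
have full K : exists2 k, (K <= k)%N & forall i, (a k <= i < a k.+1)%N -> A i.
  have /existsNP[k /not_implyP[Kk /forall2NP Ak]] := noK K.
  by exists k => // i ik; have [//|/contrapT] := Ak i.
pose blk := block a_incr.
(* A member of I that agrees with [pi k] on every block [k] contained in [A]. *)
pose A' i := A i /\
  ((forall j, (a (blk i) <= j < a (blk i).+1)%N -> A j) -> pi (blk i) i).
pose f i := `[< A' i >].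
have [j _ Gjf] : (\bigcup_j G j) f by apply: IG; apply: Isub IA => i /asboolP[].
have [k jk Ak] := full j.
apply: (a_pi k f f); last by exists j => //=; rewrite ltnS.
move=> i ik; rewrite /splice; case: ltnP => // ki.
have blk_i : blk i = k by apply: blockE; rewrite ?ki.
rewrite /f /A' blk_i; apply/asboolP/idP => [[_]|piki]; first exact.
by split=> [|//]; apply: Ak; rewrite ki.
Qed.

Lemma block_filter_perm (a : nat -> nat) (P : nat -> pred nat) :
  a 0 = 0%N -> (forall k, (a k < a k.+1)%N) ->
  exists p : nat -> nat, bijective p /\ forall k, exists2 c, (a k <= c)%N &
    [seq p i | i <- index_iota (a k) c] =
    [seq j <- index_iota (a k) (a k.+1) | P k j].
Proof.
move=> a0 a_incr.
pose F k := [seq j <- index_iota (a k) (a k.+1) | P k j].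
pose L k := F k ++ [seq j <- index_iota (a k) (a k.+1) | predC (P k) j].
have L_perm k : perm_eq (L k) (index_iota (a k) (a k.+1)).
  by rewrite /L perm_filterC.
exists (block_perm a_incr L); split=> [|k]; first exact: block_perm_bij.
have sizeF : (size (F k) <= a k.+1 - a k)%N.
  by rewrite size_filter; apply: leq_trans (count_size _ _) _; rewrite size_iota.
exists (a k + size (F k))%N; first exact: leq_addr.
rewrite /index_iota addKn; apply: (@eq_from_nth _ 0%N) => [|i].
  by rewrite size_map size_iota.
rewrite size_map size_iota => iF.
rewrite (nth_map 0%N) ?size_iota // nth_iota // block_permE ?nth_cat ?iF //.
exact: leq_trans iF sizeF.
Qed.

Lemma sum_nat_reindex (V : zmodType) (p g : nat -> nat) (F : nat -> V) n m N M :
  cancel p g -> cancel g p -> (forall k, (n <= k < m)%N -> (N <= p k < M)%N) ->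
  \sum_(n <= k < m) F (p k) = \sum_(N <= j < M | (n <= g j < m)%N) F j.
Proof.
move=> pg gp pNM; rewrite -[RHS]big_filter -(big_map p xpredT).
apply: perm_big; apply: uniq_perm.
- by rewrite map_inj_uniq ?iota_uniq //; exact: can_inj pg.
- by rewrite filter_uniq ?iota_uniq.
move=> j; rewrite mem_filter mem_index_iota; apply/mapP/idP => [[k]|/andP[gj Nj]].
  by rewrite mem_index_iota => nkm ->; rewrite pg nkm pNM.
by exists (g j); rewrite ?gp // mem_index_iota.
Qed.

Section SignedSeries.
Variables (R : realType) (X : completeNormedModType R).

Definition signed_seq (t : nat -> bool) (x : nat -> X) : nat -> X :=
  fun n => sgn_of (R:=R) (t n) *: x n.

Definition subseries_cauchy (x : nat -> X) : Prop := forall e : R, 0 < e ->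
  exists N, forall M (P : pred nat), `|\sum_(N <= i < M | P i) x i| < e.

Lemma not_subseries_cauchy x : ~ subseries_cauchy x -> exists2 e : R, 0 < e &
  forall N, exists M (P : pred nat), e <= `|\sum_(N <= i < M | P i) x i|.
Proof.
move=> /existsNP[e /not_implyP[e0 /forallNP xe]]; exists e => // N.
have /existsNP[M /existsNP[P /negP]] := xe N.
by rewrite -leNgt; exists M, P.
Qed.

Lemma cvg_seriesP (u : nat -> X) : cvgn (series u) <->
  forall e : R, 0 < e ->
    exists N, forall n m, (N <= n)%N -> `|\sum_(n <= k < m) u k| < e.
Proof.
rewrite -(cauchy_cvgP (series u @ \oo)) cauchy_seriesP; split=> uc e e0.
  have [[A B] /= [[NA _ NA_A] [NB _ NB_B]] AB] := uc e e0.
  exists (maxn NA NB) => n m; rewrite geq_max => /andP[NAn NBn].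
  have [nm|mn] := leqP n m; last by rewrite big_geq ?normr0 // ltnW.
  by apply: (AB (n, m)); split; [exact: NA_A | exact: NB_B (leq_trans NBn nm)].
have [N uN] := uc e e0.
exists ([set n | (N <= n)%N], [set n | (N <= n)%N]); first by split; exists N.
by move=> [n m] [/uN].
Qed.

Lemma sum_signed t x n m : \sum_(n <= k < m) signed_seq t x k =
  \sum_(n <= k < m | t k) x k - \sum_(n <= k < m | ~~ t k) x k.
Proof.
rewrite (bigID t) /= -sumrN; congr (_ + _); apply: eq_bigr => k.
  by rewrite /signed_seq => ->; rewrite scale1r.
by rewrite /signed_seq => /negbTE ->; rewrite scaleN1r.
Qed.

Lemma subseries_cauchy_signed x t :
  subseries_cauchy x -> cvgn (series (signed_seq t x)).
Proof.
move=> xC; apply/cvg_seriesP => e e0.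
have [N xN] := xC _ (divr_gt0 e0 (ltr0Sn _ 1)).
exists N => n m Nn.
rewrite sum_signed (big_nat_widenl _ _ _ _ _ Nn) (big_nat_widenl _ _ _ _ _ Nn).
by apply: le_lt_trans (ler_normB _ _) _; rewrite (splitr e) ltrD ?xN.
Qed.

Lemma cvg_I_convergent_series (I : set (set nat)) (u : nat -> X) :
  (forall A, finite_set A -> I A) -> cvgn (series u) -> I_convergent_series I u.
Proof.
move=> Ifin cu; exists (limn (series u)) => e e0; apply: Ifin.
have [N _ Nu] := (cvgrPdistC_lt _ _).1 cu e e0.
apply: sub_finite_set (finite_II N) => n /=; apply: contraPP => /negP.
rewrite -leqNgt => Nn; apply/negP; rewrite -leNgt ltW //; exact: Nu (leqW Nn).
Qed.

Lemma subseries_cauchy_unconditional x :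
  subseries_cauchy x -> unconditionally_convergent x.
Proof.
move=> xC p [g pg gp]; apply/cvg_seriesP => e e0.
have [N xN] := xC e e0.
exists (\max_(j < N) g j).+1 => n m Nn.
pose M := maxn N (\max_(k < m) p k).+1.
rewrite (@sum_nat_reindex _ p g _ _ _ N M) //.
move=> k /andP[nk km]; rewrite leq_max ltnS (leq_bigmax (Ordinal km)) orbT andbT.
rewrite leqNgt; apply/negP => pkN.
have := leq_bigmax (F := fun j : 'I_N => g j) (Ordinal pkN).
by rewrite /= pg leqNgt (leq_trans Nn nk).
Qed.

Lemma unconditional_subseries_cauchy x :
  unconditionally_convergent x -> subseries_cauchy x.
Proof.
move=> xu; apply: contrapT => /not_subseries_cauchy[e e0 xe].
have /all_sig[MP MPe] N : {MP : nat * pred nat |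
    e <= `|\sum_(N <= i < MP.1 | MP.2 i) x i|}.
  by apply: cid; have [M [P ?]] := xe N; exists (M, P).
have MP_gt N : (N < (MP N).1)%N.
  rewrite ltnNge; apply/negP => MN.
  by have := MPe N; rewrite big_geq // normr0 leNgt e0.
pose a := fix a k := if k is k'.+1 then (MP (a k')).1 else 0%N.
have a_incr k : (a k < a k.+1)%N by exact: MP_gt.
have [p [pbij p_blocks]] :=
  block_filter_perm (fun k => (MP (a k)).2) (erefl : a 0 = 0%N) a_incr.
have [N pN] := (cvg_seriesP _).1 (xu p pbij) e e0.
have [c _ pNc] := p_blocks N.
have := pN (a N) c (ltn_incr_self a_incr N).
by rewrite -(big_map p xpredT x) pNc big_filter ltNge MPe.
Qed.

End SignedSeries.

Lemma far_addr_or_subr (R : realType) (V : normedModType R) (r : R) (z y d : V) :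
  r < `|z - d| -> r < `|z + y - d| \/ r < `|z - y - d|.
Proof.
move=> zd; apply: contrapT => /not_orP[/negP + /negP].
rewrite -!leNgt => zyd zyd'.
have : `|(z + y - d) + (z - y - d)| <= r + r.
  by apply: le_trans (ler_normD _ _) _; rewrite lerD.
have -> : (z + y - d) + (z - y - d) = (z - d) *+ 2.
  rewrite mulr2n addrACA [RHS]addrACA; congr (_ + _).
  by rewrite addrACA subrr addr0.
by rewrite normrMn mulr2n; lra.
Qed.

Section FarSigns.
Variables (R : realType) (X : completeNormedModType R) (x : nat -> X).

Lemma series_signed_cylinder t t' n :
  cylinder t n t' -> series (signed_seq t' x) n = series (signed_seq t x) n.
Proof.
by move=> tt'; apply: eq_big_nat => i /andP[_ /tt']; rewrite /signed_seq => ->.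
Qed.

Lemma signed_series_stay_far (d : X) (r : R) t M :
  r < `|series (signed_seq t x) M - d| ->
  exists2 t', cylinder t M t' &
    forall n, (M <= n)%N -> r < `|series (signed_seq t' x) n - d|.
Proof.
move=> far.
pose sign k z := `[< r < `|z + x (M + k)%N - d| >].
pose s := fix s k :=
  if k is k'.+1 then s k' + sgn_of (sign k' (s k')) *: x (M + k')%N
  else series (signed_seq t x) M.
have s_far k : r < `|s k - d|.
  elim: k => [//|k IH] /=; rewrite /sign; case: asboolP => [|sk_near].
    by rewrite scale1r.
  by rewrite scaleN1r; have [|//] := far_addr_or_subr (x (M + k)%N) IH.
pose t' i := if (i < M)%N then t i else sign (i - M)%N (s (i - M)%N).
have tt' : cylinder t M t' by move=> i iM; rewrite /t' iM.
have s_series k : series (signed_seq t' x) (M + k)%N = s k.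
  elim: k => [|k IH]; first by rewrite addn0 (series_signed_cylinder tt').
  rewrite addnS seriesS IH addrC /signed_seq /t' ltnNge leq_addr /=.
  by rewrite addKn.
by exists t' => // n /subnKC <-; rewrite s_series.
Qed.

Lemma signed_series_far (eps : R) (d : X) sigma a M (P : pred nat) :
  0 < eps -> eps <= `|\sum_(a <= i < M | P i) x i| ->
  exists2 t, cylinder sigma a t & eps / 2 < `|series (signed_seq t x) M - d|.
Proof.
move=> eps0 epsP.
pose t1 := splice sigma (fun _ => true) a.
pose t2 := splice sigma (fun i => ~~ ((i < M)%N && P i)) a.
have t1_t2 : series (signed_seq t1 x) M - series (signed_seq t2 x) M =
    2 *: \sum_(a <= i < M | P i) x i.
  rewrite /series /= -sumrB scaler_sumr (big_nat_widenl _ _ _ _ _ (leq0n a)).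
  rewrite [RHS]big_mkcond /=; apply: eq_big_nat => i /andP[_ iM].
  rewrite /signed_seq /t1 /t2 /splice.
  case: ltnP => ia; first by rewrite subrr andbF.
  rewrite iM andbT; case: (P i) => /=; last by rewrite subrr.
  by rewrite scale1r scaleN1r opprK scaler_nat mulr2n.
have cyl_t1 : cylinder sigma a t1 by move=> i ia; rewrite /t1 /splice ia.
have cyl_t2 : cylinder sigma a t2 by move=> i ia; rewrite /t2 /splice ia.
have [far1|near1] := ltrP (eps / 2) `|series (signed_seq t1 x) M - d|.
  by exists t1.
have [far2|near2] := ltrP (eps / 2) `|series (signed_seq t2 x) M - d|.
  by exists t2.
have : `|series (signed_seq t1 x) M - series (signed_seq t2 x) M|
    <= eps / 2 + eps / 2.
  apply: le_trans (ler_distD d _ _) _; rewrite [`|d - _|]distrC; exact: lerD.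
rewrite t1_t2 normrZ ger0_norm //; lra.
Qed.

End FarSigns.

Section DivergentSeries.
Variables (R : realType) (X : completeNormedModType R) (x : nat -> X) (eps : R).
Hypothesis eps_gt0 : 0 < eps.
Hypothesis x_far :
  forall N, exists M (P : pred nat), eps <= `|\sum_(N <= i < M | P i) x i|.

Lemma signed_series_escape (d : X) (sigma : cantor_space) a :
  exists2 t, cylinder sigma a t & exists2 b, (a <= b)%N &
    forall n, (b <= n)%N -> eps / 2 < `|series (signed_seq t x) n - d|.
Proof.
have [M [P epsP]] := x_far a.
have aM : (a <= M)%N.
  rewrite leqNgt; apply/negP => Ma.
  by move: epsP; rewrite big_geq ?(ltnW Ma) // normr0 leNgt eps_gt0.
have [t1 sigma_t1 far1] := signed_series_far d sigma eps_gt0 epsP.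
have [t t1_t far] := signed_series_stay_far far1.
exists t; last by exists M.
exact: (cylinder_trans sigma_t1 (cylinder_le aM t1_t)).
Qed.

Variables (a : nat -> nat).
Hypothesis a_incr : forall k, (a k < a k.+1)%N.

Definition returning (m : nat) : set cantor_space :=
  [set t | forall k, (m <= k)%N -> exists2 i, (a k <= i < a k.+1)%N &
    `|partial_sums (signed_seq t x) i - partial_sums (signed_seq t x) m|
      <= eps / 2].

Lemma cyl_nowhere_dense_returning m : cyl_nowhere_dense (returning m).
Proof.
move=> f n; pose c := maxn n m.+1.
have [t f_t [b cb far]] :=
  signed_series_escape (partial_sums (signed_seq f x) m) f c.
pose k := maxn m b.
have b_ak : (b <= a k)%N := leq_trans (leq_maxr m b) (ltn_incr_self a_incr k).
have c_ak1 : (c <= a k.+1)%N := leq_trans cb (leq_trans b_ak (ltnW (a_incr k))).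
exists t, (a k.+1); split.
- exact: leq_trans (leq_maxl n m.+1) c_ak1.
- exact: (cylinder_le (leq_maxl _ _) f_t).
move=> u t_u /(_ k (leq_maxl m b))[i /andP[aki ik]].
have m_c : (m.+1 <= c)%N := leq_maxr n m.+1.
rewrite /partial_sums (series_signed_cylinder x (cylinder_le ik t_u)).
rewrite (series_signed_cylinder x (cylinder_le (leq_trans m_c c_ak1) t_u)).
rewrite (series_signed_cylinder x (cylinder_le m_c f_t)) leNgt far //.
exact: leq_trans b_ak (leq_trans aki (leqnSn i)).
Qed.

Lemma B_set_sub_returning (I : set (set nat)) :
  (forall A, I A -> exists K, forall k, (K <= k)%N ->
    exists2 i, (a k <= i < a k.+1)%N & ~ A i) ->
  B_set I x `<=` \bigcup_m returning m.
Proof.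
move=> I_blocks t [l tl].
have [K K_near] := I_blocks _ (tl _ (divr_gt0 eps_gt0 (ltr0Sn _ 3))).
have [m /andP[aKm _] /negP m_near] := K_near K (leqnn K).
exists m => // k mk.
have Kk : (K <= k)%N.
  exact: leq_trans (ltn_incr_self a_incr K) (leq_trans aKm mk).
have [i ik /negP i_near] := K_near k Kk.
exists i => //; rewrite -leNgt in m_near i_near.
by apply: le_trans (ler_distD l _ _) _; rewrite [`|l - _|]distrC; lra.
Qed.

End DivergentSeries.

Lemma meager_B_set (R : realType) (X : completeNormedModType R)
    (I : set (set nat)) (x : nat -> X) :
  is_ideal I -> has_Baire_property (ideal_as_cantor_set I) ->
  ~ subseries_cauchy x -> meager (B_set I x).
Proof.
move=> I_ideal I_Baire /not_subseries_cauchy[eps eps0 x_far].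
have [_ Isub _ _] := I_ideal.
have [a a_incr I_blocks] :=
  meager_ideal_blocks Isub (ideal_Baire_meager I_ideal I_Baire).
exists (returning x eps a); split=> [m|]; last exact: B_set_sub_returning.
exact/cyl_nowhere_denseP/cyl_nowhere_dense_returning.
Qed.

Theorem corollary3p5 (R : realType) (X : completeNormedModType R)
    (I : set (set nat)) (x : nat -> X) :
  is_ideal I ->
  has_Baire_property (ideal_as_cantor_set I) ->
  (unconditionally_convergent x <-> ~ meager (B_set I x)).
Proof.
move=> I_ideal I_Baire; split=> [xu B_meager|B_nonmeager].
  have [t _] := meager_cylinder_avoid B_meager (fun _ => true) 0; apply.
  apply: cvg_I_convergent_series; first by case: I_ideal.
  exact/subseries_cauchy_signed/unconditional_subseries_cauchy.
apply: subseries_cauchy_unconditional; apply: contrapT => x_not_cauchy.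
exact/B_nonmeager/meager_B_set.
Qed.
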